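(* In the setting described in the context, assume (F1) and (F2), let $\gamma=\frac{\beta L}{L+\beta}$, and let $\alpha\in\big(0,\frac{2}{L+\beta}\big]$. Then for all $t\ge0$, $$\|\bar w(t+1)-w_*\|\le\Big(1-\gamma\alpha+\frac{\alpha L\delta}{n}\|1_n-n\pi\|_\pi\sigma_W^t\Big)\|\bar w(t)-w_*\|+\frac{\alpha L\delta}{n}\|n\pi\otimes\bar w(t)-w(t)\|_{\pi\otimes1_d}+\frac{\alpha L\delta}{n}\|1_n-n\pi\|_\pi\sigma_W^t\|w_*\|.$$
   Context: $G=(V,E)$ directed on $\{1,\dots,n\}$, self-loop at each vertex, strongly connected; $d_j=|\{i:(j,i)\in E\}|$, $W_{ij}=1/d_j$ if $(j,i)\in E$, else $0$. $\pi$: $W\pi=\pi$, $\pi_i>0$, $\sum\pi_i=1$; $W^\infty=\pi1_n^\top$ (so $(W^\infty\otimes I_d)w=n\pi\otimes\bar w$). $\|x\|_\pi=(\sum_ix_i^2/\pi_i)^{1/2}$ on $\mathbb R^n$, $|||\cdot|||_\pi$ the induced operator norm, $\sigma_W=|||W-W^\infty|||_\pi$ (known $<1$). On $\mathbb R^{nd}$, $\|x\|_{\pi\otimes1_d}=(\sum_i\|x_i\|^2/\pi_i)^{1/2}$. $v\otimes u=\mathrm{col}(v_1u,\dots,v_nu)$. $f_i:\mathbb R^d\to\mathbb R$, $f=\frac1n\sum f_i$; (F1) each $\nabla f_i$ is $L_i$-Lipschitz, $L=\max L_i$; (F2) $f$ is $\beta$-strongly convex, $\beta>0$; $w_*$ is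 the minimizer of $f$. Algorithm with stepsize $\alpha>0$: given $w(0)\in\mathbb R^{nd}$, $y(0)=1_n$; for $t\ge0$: $z_i(t)=w_i(t)/y_i(t)$, $x_i(t)=w_i(t)-\alpha\nabla f_i(z_i(t))$, $w_i(t+1)=\sum_jW_{ij}x_j(t)$, $y_i(t+1)=\sum_jW_{ij}y_j(t)$. $\bar w(t)=\frac1n\sum_iw_i(t)$, $\delta=\sup_{t\ge0}\max_i1/y_i(t)$. *)

From HB Require Import structures.
From mathcomp Require Import all_boot all_order all_algebra.
From mathcomp Require Import all_classical all_reals all_analysis.
Set Implicit Arguments. Unset Strict Implicit. Unset Printing Implicit Defensive.
Import Order.TTheory GRing.Theory Num.Theory.
Import numFieldNormedType.Exports.
Local Open Scope classical_set_scope.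
Local Open Scope ring_scope.

(* out-degree d_j = |{i : (j,i) in E}| ; E j i means edge (j,i) *)
Definition outdeg (n : nat) (E : rel 'I_n) (j : 'I_n) : nat := #|[set i | E j i]|.

Definition Wmx (R : realType) (n : nat) (E : rel 'I_n) : 'M[R]_n :=
  \matrix_(i, j) (if E j i then (outdeg E j)%:R^-1 else 0).

Definition Winf (R : realType) (n : nat) (pi : 'cV[R]_n) : 'M[R]_n :=
  pi *m const_mx 1.

Definition pinorm (R : realType) (n : nat) (pi x : 'cV[R]_n) : R :=
  Num.sqrt (\sum_i (x i 0) ^+ 2 / pi i 0).

Definition opnorm_pi (R : realType) (n : nat) (pi : 'cV[R]_n) (A : 'M[R]_n) : R :=
  sup [set r | exists x : 'cV[R]_n, pinorm pi x <= 1 /\ r = pinorm pi (A *m x)].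

Definition sigmaW (R : realType) (n : nat) (E : rel 'I_n) (pi : 'cV[R]_n) : R :=
  opnorm_pi pi (Wmx R E - Winf pi).

Definition enorm (R : realType) (d : nat) (v : 'rV[R]_d) : R :=
  Num.sqrt (\sum_k (v 0 k) ^+ 2).

(* ||x||_{pi (x) 1_d} on R^{nd}, x given blockwise *)
Definition blocknorm (R : realType) (n d : nat) (pi : 'cV[R]_n)
  (x : 'I_n -> 'rV[R]_d) : R :=
  Num.sqrt (\sum_i (enorm (x i)) ^+ 2 / pi i 0).

Definition grad (R : realType) (d : nat) (g : 'rV[R]_d -> R) (x : 'rV[R]_d)
  : 'rV[R]_d := \row_k ('d g x (delta_mx 0 k)).

Fixpoint yseq (R : realType) (n : nat) (E : rel 'I_n) (t : nat) : 'cV[R]_n :=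
  match t with
  | 0 => const_mx 1
  | t'.+1 => Wmx R E *m yseq R E t'
  end.

Fixpoint wseq (R : realType) (n d : nat) (E : rel 'I_n)
  (fi : 'I_n -> 'rV[R]_d -> R) (alpha : R) (w0 : 'I_n -> 'rV[R]_d) (t : nat)
  : 'I_n -> 'rV[R]_d :=
  match t with
  | 0 => w0
  | t'.+1 => fun i =>
      let w := wseq E fi alpha w0 t' in
      let y := yseq R E t' in
      \sum_j Wmx R E i j *:
         (w j - alpha *: grad (fi j) ((y j 0)^-1 *: w j))
  end.

Definition wbar (R : realType) (n d : nat) (w : 'I_n -> 'rV[R]_d) : 'rV[R]_d :=
  (n%:R)^-1 *: \sum_i w i.

Definition deltaY (R : realType) (n : nat) (E : rel 'I_n) : R :=
  sup [set r | exists (t : nat) (i : 'I_n), r = (yseq R E t i 0)^-1].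

Definition avgf (R : realType) (n d : nat) (fi : 'I_n -> 'rV[R]_d -> R)
  (x : 'rV[R]_d) : R := (n%:R)^-1 * \sum_i fi i x.

Definition strongly_convex (R : realType) (d : nat) (beta : R) (g : 'rV[R]_d -> R)
  : Prop :=
  forall (x y : 'rV[R]_d) (th : R), 0 <= th <= 1 ->
    g (th *: x + (1 - th) *: y) <=
      th * g x + (1 - th) * g y - beta / 2 * th * (1 - th) * (enorm (x - y)) ^+ 2.

From HB Require Import structures.
From mathcomp Require Import all_boot all_order all_algebra.
From mathcomp Require Import all_classical all_reals all_analysis.
From mathcomp Require Import ring lra.
Import Order.TTheory GRing.Theory Num.Theory.
Import numFieldNormedType.Exports.
Local Open Scope ring_scope.
Set Implicit Arguments. Unset Strict Implicit. Unset Printing Implicit Defensive.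

(* Averaged over the agents, the update makes [wbar(t+1)] an inexact gradient
   step for [f] from [wbar(t)]: the exact gradient [grad f (wbar(t))] is replaced
   by the average of the [grad f_i] at the de-biased local iterates
   [z_i = w_i / y_i].  Strong convexity and smoothness make [grad f]
   co-coercive, so for [alpha <= 2 / (L + beta)] the exact step contracts the
   distance to [w_*] by [1 - gamma alpha].  The gradient error is at most
   [(L / n) sum_i |wbar - z_i|], and writing
   [wbar - z_i = y_i^-1 ((n pi_i wbar - w_i) + (y_i - n pi_i) wbar)] splits it
   into the consensus error and the push-sum error [y(t) - n pi], which
   [W^oo] annihilates so that it decays like [sigma_W^t]; the factor [delta]
   bounds [1 / y_i], and Cauchy-Schwarz with the weights [pi_i] turns the sums
   into the [pi]-norms. *)

Lemma sum_cauchy_schwarz (R : realDomainType) (I : finType) (x y : I -> R) :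
  (\sum_i x i * y i) ^+ 2 <= (\sum_i x i ^+ 2) * (\sum_i y i ^+ 2).
Proof.
set A := \sum_i x i ^+ 2; set B := \sum_i x i * y i; set C := \sum_i y i ^+ 2.
have C_ge0 : 0 <= C by apply: sumr_ge0 => i _; exact: sqr_ge0.
have [C0|C_neq0] := eqVneq C 0.
  have y0 i : y i = 0.
    by apply/eqP; rewrite -sqrf_eq0 (psumr_eq0P (fun j _ => sqr_ge0 (y j)) C0).
  rewrite /B big1 => [|i _]; last by rewrite y0 mulr0.
  by rewrite expr0n mulr_ge0 // sumr_ge0 // => i _; exact: sqr_ge0.
have sqr_sum : \sum_i (x i * C - y i * B) ^+ 2 = C * (C * A - B ^+ 2).
  transitivity (\sum_i (C ^+ 2 * x i ^+ 2 - (2 * C * B) * (x i * y i) + B ^+ 2 * y i ^+ 2)).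
    by apply: eq_bigr => i _; ring.
  by rewrite big_split sumrB /= -!mulr_sumr -/A -/B -/C; ring.
have : 0 <= C * (C * A - B ^+ 2).
  by rewrite -sqr_sum; apply: sumr_ge0 => i _; exact: sqr_ge0.
by rewrite pmulr_rge0 ?lt_def ?C_neq0 // subr_ge0 mulrC.
Qed.

Section Euclidean.
Variables (R : realType) (d : nat).
Implicit Types (u v w : 'rV[R]_d).

Definition dot u v : R := \sum_k u 0 k * v 0 k.

Lemma dotC u v : dot u v = dot v u.
Proof. by apply: eq_bigr => k _; rewrite mulrC. Qed.

Lemma dotDl u v w : dot (u + v) w = dot u w + dot v w.
Proof. by rewrite /dot -big_split; apply: eq_bigr => k _; rewrite !mxE mulrDl. Qed.

Lemma dotZl a u w : dot (a *: u) w = a * dot u w.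
Proof. by rewrite /dot mulr_sumr; apply: eq_bigr => k _; rewrite !mxE mulrA. Qed.

Lemma dotNl u w : dot (- u) w = - dot u w.
Proof. by rewrite -scaleN1r dotZl mulN1r. Qed.

Lemma dotBl u v w : dot (u - v) w = dot u w - dot v w.
Proof. by rewrite dotDl dotNl. Qed.

Lemma dotDr u v w : dot w (u + v) = dot w u + dot w v.
Proof. by rewrite ![dot w _]dotC dotDl. Qed.

Lemma dotZr a u w : dot w (a *: u) = a * dot w u.
Proof. by rewrite ![dot w _]dotC dotZl. Qed.

Lemma dotNr u w : dot w (- u) = - dot w u.
Proof. by rewrite ![dot w _]dotC dotNl. Qed.

Lemma dotBr u v w : dot w (u - v) = dot w u - dot w v.
Proof. by rewrite ![dot w _]dotC dotBl. Qed.

Lemma dotvv_shift u v : dot v v = dot u u + 2 * dot u (v - u) + dot (v - u) (v - u).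
Proof. by rewrite !(dotBl, dotBr) (dotC v u); ring. Qed.

Lemma dot_suml (I : finType) (v : I -> 'rV[R]_d) w :
  dot (\sum_i v i) w = \sum_i dot (v i) w.
Proof.
rewrite /dot exchange_big /=; apply: eq_bigr => k _.
by rewrite summxE mulr_suml.
Qed.

Lemma dotvv_sum v : dot v v = \sum_k v 0 k ^+ 2.
Proof. by apply: eq_bigr => k _; rewrite expr2. Qed.

Lemma dotvv_ge0 v : 0 <= dot v v.
Proof. by rewrite dotvv_sum; apply: sumr_ge0 => k _; exact: sqr_ge0. Qed.

Lemma dotvv_eq0 v : (dot v v == 0) = (v == 0).
Proof.
apply/idP/eqP => [|->]; last by rewrite /dot big1 // => k _; rewrite mxE mul0r.
rewrite dotvv_sum => /eqP v0; apply/rowP => k; rewrite mxE; apply/eqP.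
by rewrite -sqrf_eq0 (psumr_eq0P (fun j _ => sqr_ge0 (v 0 j)) v0).
Qed.

Lemma enorm_ge0 v : 0 <= enorm v.
Proof. exact: sqrtr_ge0. Qed.

Lemma enormE v : enorm v = Num.sqrt (dot v v).
Proof. by rewrite dotvv_sum. Qed.

Lemma enorm_sqr v : enorm v ^+ 2 = dot v v.
Proof. by rewrite enormE sqr_sqrtr ?dotvv_ge0. Qed.

Lemma dot_sqr_le u v : dot u v ^+ 2 <= dot u u * dot v v.
Proof. by rewrite !dotvv_sum; exact: sum_cauchy_schwarz. Qed.

Lemma ler_norm_dot u v : `|dot u v| <= enorm u * enorm v.
Proof.
rewrite !enormE -sqrtrM ?dotvv_ge0 // -sqrtr_sqr ler_sqrt ?dot_sqr_le //.
by rewrite mulr_ge0 ?dotvv_ge0.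
Qed.

Lemma enormD u v : enorm (u + v) <= enorm u + enorm v.
Proof.
rewrite -(ler_pXn2r (n := 2)) ?nnegrE ?addr_ge0 ?enorm_ge0 //.
rewrite sqrrD !enorm_sqr dotDl !dotDr (dotC v u).
have := le_trans (ler_norm _) (ler_norm_dot u v); lra.
Qed.

Lemma enormZ a u : enorm (a *: u) = `|a| * enorm u.
Proof. by rewrite !enormE dotZl dotZr mulrA -expr2 sqrtrM ?sqr_ge0 // sqrtr_sqr. Qed.

Lemma enormN u : enorm (- u) = enorm u.
Proof. by rewrite -scaleN1r enormZ normrN normr1 mul1r. Qed.

Lemma enorm0 : enorm (0 : 'rV[R]_d) = 0.
Proof. by rewrite -(scale0r 0) enormZ normr0 mul0r. Qed.

Lemma enorm_sum (I : finType) (v : I -> 'rV[R]_d) :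
  enorm (\sum_i v i) <= \sum_i enorm (v i).
Proof.
elim/big_ind2: _ => [|a b x y ab xy|//]; first by rewrite enorm0.
exact: le_trans (enormD _ _) (lerD ab xy).
Qed.

Lemma enorm_sub_scale_le (y q delta : R) (x v : 'rV[R]_d) :
  0 < y -> y^-1 <= delta ->
  enorm (x - y^-1 *: v) <= delta * (enorm (q *: x - v) + `|y - q| * enorm x).
Proof.
move=> y_gt0 y_le.
have -> : x - y^-1 *: v = y^-1 *: ((q *: x - v) + (y - q) *: x).
  by apply/rowP => k; rewrite !mxE; field; exact: lt0r_neq0.
rewrite enormZ gtr0_norm ?invr_gt0 //.
apply: ler_pM => //; [by rewrite invr_ge0 ltW | exact: enorm_ge0 |].
by apply: le_trans (enormD _ _) _; rewrite enormZ.
Qed.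

End Euclidean.

Definition is_gradient (R : realType) (d : nat) (F : 'rV[R]_d -> R)
    (G : 'rV[R]_d -> 'rV[R]_d) :=
  forall x u (s : R), is_derive s 1 (fun t => F (t *: u + x)) (dot (G (s *: u + x)) u).

Definition enorm_lipschitz (R : realType) (d : nat) (L : R)
    (G : 'rV[R]_d -> 'rV[R]_d) :=
  forall x y, enorm (G x - G y) <= L * enorm (x - y).

Section Gradient.
Variables (R : realType) (d : nat).

Lemma is_derive_line (f : 'rV[R]_d -> R) x u (s : R) :
  differentiable f (s *: u + x) ->
  is_derive s 1 (fun t => f (t *: u + x)) ('d f (s *: u + x) u).
Proof.
move=> df.
have [_ dline] : is_diff s (( *:%R^~ u) + cst x) (( *:%R^~ u) + 0) by exact: _.
have dfline : differentiable (f \o (( *:%R^~ u) + cst x)) s.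
  exact: differentiable_comp.
apply: DeriveDef; first exact/derivable1_diffP.
rewrite deriveE // diff_comp // dline.
by rewrite /= !fctE scale1r addr0.
Qed.

Lemma diff_gradE (f : 'rV[R]_d -> R) z u :
  differentiable f z -> 'd f z u = dot (grad f z) u.
Proof.
move=> df; rewrite {1}(row_sum_delta u) linear_sum /dot.
by apply: eq_bigr => k _; rewrite linearZ /= /grad mxE mulrC.
Qed.

Lemma is_gradient_avgf n (fi : 'I_n -> 'rV[R]_d -> R) :
  (forall i x, differentiable (fi i) x) ->
  is_gradient (avgf fi) (fun x => n%:R^-1 *: \sum_i grad (fi i) x).
Proof.
move=> dfi x u s.
have -> : (fun t => avgf fi (t *: u + x)) =
          n%:R^-1 \*: \sum_i (fun t => fi i (t *: u + x)).
  by apply/funext => t; rewrite /avgf /= fct_sumE.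
apply: is_derive_eq.
  by apply: is_deriveZ; apply: is_derive_sum => i; exact: is_derive_line.
rewrite dotZl dot_suml.
by congr (_ * _); apply: eq_bigr => i _; rewrite -diff_gradE.
Qed.

Lemma enorm_lipschitz_avg n (gi : 'I_n -> 'rV[R]_d -> 'rV[R]_d) (Li : 'I_n -> R) :
  (forall i, enorm_lipschitz (Li i) (gi i)) ->
  forall x (y : 'I_n -> 'rV[R]_d),
  enorm (n%:R^-1 *: \sum_i gi i x - n%:R^-1 *: \sum_i gi i (y i)) <=
    n%:R^-1 * (\big[Num.max/0]_i Li i * \sum_i enorm (x - y i)).
Proof.
move=> gi_lip x y.
rewrite -scalerBr -sumrB enormZ ger0_norm ?invr_ge0 // ler_wpM2l ?invr_ge0 //.
apply: le_trans (enorm_sum _) _; rewrite mulr_sumr; apply: ler_sum => i _.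
apply: le_trans (gi_lip i _ _) _.
by rewrite ler_wpM2r ?enorm_ge0 ?le_bigmax.
Qed.

Lemma enorm_lipschitz_avgf n (gi : 'I_n -> 'rV[R]_d -> 'rV[R]_d) (Li : 'I_n -> R) :
  (forall i, enorm_lipschitz (Li i) (gi i)) ->
  enorm_lipschitz (\big[Num.max/0]_i Li i) (fun x => n%:R^-1 *: \sum_i gi i x).
Proof.
move=> gi_lip x y; apply: le_trans (enorm_lipschitz_avg gi_lip x (fun=> y)) _.
have : 0 <= \big[Num.max/0]_i Li i by exact: bigmax_ge_id.
move: (\big[_/_]_i Li i) => L L_ge0; rewrite sumr_const card_ord.
have [->|n_gt0] := posnP n; first by rewrite invr0 mul0r mulr_ge0 ?enorm_ge0.
rewrite -[enorm (x - y) *+ n]mulr_natr.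
rewrite (_ : n%:R^-1 * _ = L * enorm (x - y)) //.
by field; rewrite pnatr_eq0 -lt0n.
Qed.

End Gradient.

Section Smooth.
Variables (R : realType) (d : nat) (F : 'rV[R]_d -> R) (G : 'rV[R]_d -> 'rV[R]_d).
Variable L : R.
Hypothesis FG : is_gradient F G.
Hypothesis G_lip : enorm_lipschitz L G.

Lemma grad_eq0_at_min ws : (forall w, F ws <= F w) -> G ws = 0.
Proof.
move=> ws_min; apply/eqP; rewrite -dotvv_eq0; apply/eqP.
have /@derive_val <- : is_derive (0 : R) 1 (fun t => F (t *: G ws + ws)) 0.
  apply: (@derive1_at_min _ _ (-1) 1) => [|t _||t _].
  - lra.
  - exact: @ex_derive _ _ _ _ _ _ _ (FG _ _ t).
  - by rewrite in_itv /= ltrN10 ltr01.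
  - by rewrite scale0r add0r.
by move/@derive_val: (FG ws (G ws) 0) ->; rewrite scale0r add0r.
Qed.

Lemma dot_grad_line_le x u t : 0 < t ->
  dot (G (t *: u + x)) u - dot (G x) u <= L * t * dot u u.
Proof.
move=> t_gt0; rewrite -dotBl; apply: le_trans (ler_norm _) _.
apply: le_trans (ler_norm_dot _ _) _.
have := G_lip (t *: u + x) x; rewrite addrK enormZ gtr0_norm // => Glip.
apply: le_trans (ler_wpM2r (enorm_ge0 u) Glip) _.
by rewrite -enorm_sqr expr2 !mulrA.
Qed.

(* Mean value theorem for [F (t u + x) - t <G x, u> - t^2 L |u|^2 / 2] on [0, 1]. *)
Lemma descent_le x y :
  F y <= F x + dot (G x) (y - x) + L / 2 * dot (y - x) (y - x).
Proof.
set u := y - x; set c := dot (G x) u; set k := L / 2 * dot u u.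
pose h := (fun t => F (t *: u + x)) - (c \*: id) - (k \*: (id * id)).
have dh t : is_derive t (1 : R) h
    (dot (G (t *: u + x)) u - c *: 1 - k *: (t *: 1 + t *: 1)).
  by have FGxu := FG x u; apply: is_deriveB.
have [s + h10] := MVT (@ltr01 R) (fun t _ => dh t)
  (derivable_within_continuous (fun t _ => @ex_derive _ _ _ _ _ _ _ (dh t))).
rewrite in_itv /= => /andP[s_gt0 _].
have h1 : h 1 = F y - c - k.
  by rewrite /h !fctE /= scale1r subrK /GRing.scale /= !mulr1.
have h0 : h 0 = F x.
  by rewrite /h !fctE /= scale0r add0r /GRing.scale /= !mulr0 !subr0.
rewrite h1 h0 subr0 mulr1 in h10.
have := dot_grad_line_le x u s_gt0.
move: h10; rewrite -/c /k /GRing.scale /= !mulr1.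
have -> : L / 2 * dot u u * (s + s) = L * s * dot u u by field.
lra.
Qed.

End Smooth.

Lemma descent_ge (R : realType) (d : nat) (F : 'rV[R]_d -> R) G (L : R) :
  is_gradient F G -> enorm_lipschitz L G ->
  forall x y, F x + dot (G x) (y - x) - L / 2 * dot (y - x) (y - x) <= F y.
Proof.
move=> FG G_lip x y.
have NFG : is_gradient (- F) (- G).
  by move=> z u s; rewrite dotNl; exact: (is_deriveN (FG z u s)).
have NG_lip : enorm_lipschitz L (- G).
  by move=> a b; rewrite /= -opprD enormN; exact: G_lip.
have := descent_le NFG NG_lip x y; rewrite /= dotNl !fctE; lra.
Qed.

Lemma le0_small (R : realFieldType) (D K : R) : 0 <= K ->
  (forall s, 0 < s -> s <= 1 -> D <= K * s) -> D <= 0.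
Proof.
move=> K_ge0 small; rewrite leNgt; apply/negP => D_gt0.
have DK_gt0 : 0 < D + K by exact: ltr_wpDr.
have := small (D / (D + K)).
rewrite divr_gt0 // ler_pdivrMr // mul1r lerDl K_ge0 => /(_ isT isT).
rewrite mulrA ler_pdivlMr // mulrDr => DK.
have : 0 < D * D by exact: mulr_gt0.
lra.
Qed.

Section ConvexSmooth.
Variables (R : realType) (d : nat) (phi : 'rV[R]_d -> R) (g : 'rV[R]_d -> 'rV[R]_d).
Variable M : R.
Hypothesis M_gt0 : 0 < M.
Hypothesis phi_ge : forall x y, phi x + dot (g x) (y - x) <= phi y.
Hypothesis phi_le :
  forall x y, phi y <= phi x + dot (g x) (y - x) + M / 2 * dot (y - x) (y - x).

(* Compare [phi y] with [phi] at the gradient step [y - (g y - g x) / M]. *)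
Lemma convex_smooth_gap x y :
  phi x + dot (g x) (y - x) + dot (g y - g x) (g y - g x) / (2 * M) <= phi y.
Proof.
set D := g y - g x; set z := y - M^-1 *: D.
have := phi_ge x z; have := phi_le y z.
have -> : z - y = - (M^-1 *: D) by rewrite /z addrAC subrr add0r.
have -> : z - x = (y - x) - M^-1 *: D by rewrite /z addrAC.
have DD : dot D D = dot (g y) D - dot (g x) D by rewrite {1}/D dotBl.
rewrite dotNl !dotNr opprK dotBr !dotZl !dotZr.
have -> : M / 2 * (M^-1 * (M^-1 * dot D D)) = M^-1 * dot D D / 2 by field; exact: lt0r_neq0.
have -> : dot D D / (2 * M) = M^-1 * dot D D / 2 by field; exact: lt0r_neq0.
rewrite DD; lra.
Qed.

Lemma cocoercive_convex_smooth x y :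
  dot (g y - g x) (g y - g x) <= M * dot (g y - g x) (y - x).
Proof.
have := convex_smooth_gap x y; have := convex_smooth_gap y x.
rewrite -(opprB (g y)) -(opprB y) dotNl !dotNr opprK.
set Q := dot (g y - g x) (g y - g x).
have -> : Q / (2 * M) = Q / M / 2 by field; exact: lt0r_neq0.
rewrite -ler_pdivrMl // mulrC [dot _ (y - x)]dotBl.
lra.
Qed.

End ConvexSmooth.

Section GradientStep.
Variables (R : realFieldType) (L beta alpha : R).
Hypotheses (L_ge0 : 0 <= L) (beta_gt0 : 0 < beta).
Hypotheses (alpha_gt0 : 0 < alpha) (alpha_le : alpha <= 2 / (L + beta)).

Let S_gt0 : 0 < L + beta. Proof. exact: ltr_wpDl. Qed.
Let alphaS_le2 : alpha * (L + beta) <= 2. Proof. by rewrite -ler_pdivlMr. Qed.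

Lemma gd_rate_ge0 : 0 <= 1 - beta * L / (L + beta) * alpha.
Proof.
rewrite subr_ge0 mulrAC ler_pdivrMr // mul1r -(ler_pM2l S_gt0).
have : beta * L * (alpha * (L + beta)) <= beta * L * 2.
  by apply: ler_wpM2l; [exact: mulr_ge0 (ltW beta_gt0) L_ge0 | exact: alphaS_le2].
have := sqr_ge0 L; have := sqr_ge0 beta; rewrite !expr2; lra.
Qed.

(* [P], [Q], [U] stand for [<g, u>], [|g|^2], [|u|^2]; the hypothesis is co-coercivity. *)
Lemma gd_rate_sqr (P Q U : R) : 0 <= Q -> 0 <= U ->
  Q + L * beta * U <= (L + beta) * P ->
  U - 2 * alpha * P + alpha ^+ 2 * Q <= (1 - beta * L / (L + beta) * alpha) ^+ 2 * U.
Proof.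
move=> Q_ge0 U_ge0 coco; rewrite -(ler_pM2l S_gt0).
set gamma := beta * L / (L + beta).
have gammaS : gamma * (L + beta) = beta * L by rewrite divfK ?lt0r_neq0.
have h1 : alpha * (Q + L * beta * U) <= alpha * ((L + beta) * P).
  by apply: ler_wpM2l; [exact: ltW | exact: coco].
have h2 : alpha * Q * (alpha * (L + beta)) <= alpha * Q * 2.
  by apply: ler_wpM2l; [exact: mulr_ge0 (ltW alpha_gt0) Q_ge0 | exact: alphaS_le2].
have h3 : 0 <= (gamma * alpha) ^+ 2 * ((L + beta) * U).
  by apply: mulr_ge0; [exact: sqr_ge0 | exact: mulr_ge0 (ltW S_gt0) U_ge0].
have -> : (L + beta) * ((1 - gamma * alpha) ^+ 2 * U) =
  (L + beta) * U - 2 * alpha * (gamma * (L + beta)) * U + (gamma * alpha) ^+ 2 * ((L + beta) * U).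
  by ring.
rewrite gammaS; lra.
Qed.

End GradientStep.

Section StronglyConvex.
Variables (R : realType) (d : nat) (F : 'rV[R]_d -> R) (G : 'rV[R]_d -> 'rV[R]_d).
Variables (L beta : R).
Hypotheses (FG : is_gradient F G) (G_lip : enorm_lipschitz L G).
Hypotheses (L_ge0 : 0 <= L) (beta_gt0 : 0 < beta).
Hypothesis F_sc : strongly_convex beta F.

Lemma strongly_convex_ge x y :
  F x + dot (G x) (y - x) + beta / 2 * dot (y - x) (y - x) <= F y.
Proof.
set u := y - x; set N := dot u u.
suff : dot (G x) u + beta / 2 * N - F y + F x <= 0 by lra.
apply: (@le0_small _ _ ((L + beta) / 2 * N)) => [|s s_gt0 s_le1].
  exact: mulr_ge0 (divr_ge0 (addr_ge0 L_ge0 (ltW beta_gt0)) (ler0n _ 2)) (dotvv_ge0 _).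
have := @F_sc y x s; rewrite s_le1 ltW //= => /(_ isT).
have -> : s *: y + (1 - s) *: x = x + s *: u.
  by apply/rowP => k; rewrite !mxE; ring.
have := descent_ge FG G_lip x (x + s *: u).
rewrite (addrC x) addrK enorm_sqr -/u dotZl !dotZr -/N => lower upper.
rewrite -(ler_pM2l s_gt0); lra.
Qed.

Lemma strongly_monotone x y :
  beta * dot (y - x) (y - x) <= dot (G y - G x) (y - x).
Proof.
have := strongly_convex_ge x y; have := strongly_convex_ge y x.
rewrite -(opprB y x) !(dotNl, dotNr) opprK [dot (G y - G x) _]dotBl; lra.
Qed.

(* For [beta < L] this is the co-coercivity of the convex, [(L - beta)]-smooth
   function [F x - beta / 2 |x|^2]; otherwise strong monotonicity and the
   Lipschitz bound suffice. *)
Lemma cocoercive x y :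
  dot (G y - G x) (G y - G x) + L * beta * dot (y - x) (y - x) <=
    (L + beta) * dot (G y - G x) (y - x).
Proof.
set N := dot (y - x) (y - x).
have [L_le_beta|beta_lt_L] := leP L beta.
  have mono := strongly_monotone x y.
  have lip : dot (G y - G x) (G y - G x) <= L ^+ 2 * N.
    rewrite /N -!enorm_sqr -exprMn.
    by rewrite ler_pXn2r ?nnegrE ?mulr_ge0 ?enorm_ge0 ?G_lip.
  have : (L + beta) * (beta * N) <= (L + beta) * dot (G y - G x) (y - x).
    by apply: ler_wpM2l => //; exact: addr_ge0 L_ge0 (ltW beta_gt0).
  have : 0 <= (beta - L) * ((beta + L) * N).
    apply: mulr_ge0; first by rewrite subr_ge0.
    exact: mulr_ge0 (addr_ge0 (ltW beta_gt0) L_ge0) (dotvv_ge0 _).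
  lra.
pose phi z := F z - beta / 2 * dot z z.
pose g z := G z - beta *: z.
have phi_ge a b : phi a + dot (g a) (b - a) <= phi b.
  have := strongly_convex_ge a b.
  by rewrite /phi /g [dot (G a - _) _]dotBl dotZl (dotvv_shift a b); lra.
have phi_le a b :
    phi b <= phi a + dot (g a) (b - a) + (L - beta) / 2 * dot (b - a) (b - a).
  have := descent_le FG G_lip a b.
  by rewrite /phi /g [dot (G a - _) _]dotBl dotZl (dotvv_shift a b); lra.
have := cocoercive_convex_smooth (M := L - beta) _ phi_ge phi_le x y.
rewrite subr_gt0 beta_lt_L => /(_ isT).
have -> : g y - g x = (G y - G x) - beta *: (y - x).
  by apply/rowP => k; rewrite !mxE; ring.
rewrite /N; move: (G y - G x) (y - x) => D u.
rewrite !(dotBl, dotBr, dotZl, dotZr) (dotC u D); lra.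
Qed.

Lemma gd_contract alpha : 0 < alpha -> alpha <= 2 / (L + beta) ->
  forall x y, enorm ((x - y) - alpha *: (G x - G y)) <=
    (1 - beta * L / (L + beta) * alpha) * enorm (x - y).
Proof.
move=> alpha_gt0 alpha_le x y.
have rate_ge0 := gd_rate_ge0 L_ge0 beta_gt0 alpha_le.
rewrite -(ler_pXn2r (n := 2)) ?nnegrE ?mulr_ge0 ?enorm_ge0 //.
rewrite exprMn !enorm_sqr.
have := gd_rate_sqr L_ge0 beta_gt0 alpha_gt0 alpha_le
  (dotvv_ge0 (G x - G y)) (dotvv_ge0 (x - y)) (cocoercive y x).
move: (G x - G y) (x - y) => g u.
rewrite !(dotBl, dotBr, dotZl, dotZr) (dotC u g); lra.
Qed.

Lemma inexact_gd_step alpha : 0 < alpha -> alpha <= 2 / (L + beta) ->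
  forall ws x g, G ws = 0 ->
  enorm (x - alpha *: g - ws) <=
    (1 - beta * L / (L + beta) * alpha) * enorm (x - ws) + alpha * enorm (G x - g).
Proof.
move=> alpha_gt0 alpha_le ws x g Gws0.
have -> : x - alpha *: g - ws = ((x - ws) - alpha *: (G x - G ws)) + alpha *: (G x - g).
  by rewrite Gws0 subr0; apply/rowP => k; rewrite !mxE; ring.
apply: le_trans (enormD _ _) _.
rewrite enormZ gtr0_norm //; apply: lerD => //.
exact: gd_contract.
Qed.

End StronglyConvex.

Section WeightedNorm.
Variables (R : realType) (n : nat) (pi : 'cV[R]_n).

Lemma pinorm_ge0 x : 0 <= pinorm pi x.
Proof. exact: sqrtr_ge0. Qed.

Lemma pinorm0 : pinorm pi 0 = 0.
Proof. by rewrite /pinorm big1 ?sqrtr0 // => i _; rewrite mxE expr0n mul0r. Qed.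

Lemma pinormZ a x : pinorm pi (a *: x) = `|a| * pinorm pi x.
Proof.
rewrite /pinorm -sqrtr_sqr -sqrtrM ?sqr_ge0 // mulr_sumr.
by congr Num.sqrt; apply: eq_bigr => i _; rewrite mxE exprMn -mulrA.
Qed.

Hypothesis pi_gt0 : forall i, 0 < pi i 0.
Hypothesis pi_sum1 : \sum_i pi i 0 = 1.

Let wsqr_ge0 (a : 'I_n -> R) : 0 <= \sum_i a i ^+ 2 / pi i 0.
Proof. by apply: sumr_ge0 => i _; rewrite divr_ge0 ?sqr_ge0 ?ltW. Qed.

(* Cauchy--Schwarz against the weights [sqrt pi_i], whose squares sum to one. *)
Lemma sum_le_weighted_l2 (a : 'I_n -> R) :
  \sum_i a i <= Num.sqrt (\sum_i a i ^+ 2 / pi i 0).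
Proof.
have sqrt_pi_neq0 i : Num.sqrt (pi i 0) != 0 by rewrite gt_eqF ?sqrtr_gt0.
have := sum_cauchy_schwarz (fun i => a i / Num.sqrt (pi i 0)) (fun i => Num.sqrt (pi i 0)).
under eq_bigr do rewrite divfK //.
under [X in _ <= X * _]eq_bigr do rewrite expr_div_n sqr_sqrtr ?ltW //.
under [X in _ <= _ * X]eq_bigr do rewrite sqr_sqrtr ?ltW //.
rewrite pi_sum1 mulr1 => CS.
by apply: le_trans (ler_norm _) _; rewrite -sqrtr_sqr ler_sqrt.
Qed.

Lemma sum_norm_le_pinorm (x : 'cV[R]_n) : \sum_i `|x i 0| <= pinorm pi x.
Proof.
apply: le_trans (sum_le_weighted_l2 _) _.
by under eq_bigr do rewrite (real_normK (num_real _)).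
Qed.

Lemma sum_enorm_le_blocknorm d (x : 'I_n -> 'rV[R]_d) :
  \sum_i enorm (x i) <= blocknorm pi x.
Proof. exact: sum_le_weighted_l2. Qed.

Lemma pinorm_eq0 (x : 'cV[R]_n) : pinorm pi x = 0 -> x = 0.
Proof.
move=> x0; apply/matrixP => i j; rewrite ord1 mxE; apply/eqP.
rewrite -normr_le0 -x0; apply: le_trans (sum_norm_le_pinorm x).
by rewrite (bigD1 i) //= lerDl sumr_ge0.
Qed.

Lemma opnorm_pi_bounded (A : 'M[R]_n) :
  has_ubound [set r | exists x, pinorm pi x <= 1 /\ r = pinorm pi (A *m x)].
Proof.
exists (Num.sqrt (\sum_i (\sum_j `|A i j|) ^+ 2 / pi i 0)) => _ [x [x_le1 ->]].
have x_entry_le1 j : `|x j 0| <= 1.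
  apply: le_trans (le_trans _ (sum_norm_le_pinorm x)) x_le1.
  by rewrite (bigD1 j) //= lerDl sumr_ge0.
rewrite ler_sqrt //; apply: ler_sum => i _; rewrite ler_pM2r ?invr_gt0 //.
rewrite -real_normK ?num_real // ler_pXn2r ?nnegrE ?sumr_ge0 //.
rewrite mxE; apply: le_trans (ler_norm_sum _ _ _) _; apply: ler_sum => j _.
by rewrite normrM ler_piMr.
Qed.

Lemma opnorm_pi_ge0 (A : 'M[R]_n) : 0 <= opnorm_pi pi A.
Proof.
apply: (ub_le_sup (opnorm_pi_bounded A)); exists 0.
by rewrite mulmx0 pinorm0.
Qed.

Lemma pinorm_mulmx_le (A : 'M[R]_n) x :
  pinorm pi (A *m x) <= opnorm_pi pi A * pinorm pi x.
Proof.
have [x0|x_neq0] := eqVneq (pinorm pi x) 0.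
  by rewrite (pinorm_eq0 x0) mulmx0 pinorm0 mulr0.
have x_gt0 : 0 < pinorm pi x by rewrite lt_def x_neq0 pinorm_ge0.
have inv_gt0 : 0 < (pinorm pi x)^-1 by rewrite invr_gt0.
rewrite mulrC -ler_pdivrMl // -(gtr0_norm inv_gt0) -pinormZ scalemxAr.
apply: (ub_le_sup (opnorm_pi_bounded A)); exists ((pinorm pi x)^-1 *: x).
by split=> //; rewrite pinormZ gtr0_norm // mulVf.
Qed.

End WeightedNorm.

Section PushSum.
Variables (R : realType) (n : nat) (E : rel 'I_n) (pi : 'cV[R]_n).
Hypothesis E_refl : forall i, E i i.
Hypothesis W_pi : Wmx R E *m pi = pi.
Hypothesis pi_gt0 : forall i, 0 < pi i 0.
Hypothesis pi_sum1 : \sum_i pi i 0 = 1.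

Lemma Wmx_ge0 i j : 0 <= Wmx R E i j.
Proof. by rewrite mxE; case: (E j i); rewrite ?invr_ge0. Qed.

Lemma Wmx_colsum j : \sum_i Wmx R E i j = 1.
Proof.
under eq_bigr do rewrite mxE.
rewrite -big_mkcond /= sumr_const.
have -> : #|E j| = outdeg E j.
  by apply: eq_card => i; apply/idP/idP; rewrite in_setE.
rewrite -[LHS]mulr_natr mulVf // pnatr_eq0 -lt0n.
by apply/card_gt0P; exists j; rewrite in_setE; exact: E_refl.
Qed.

Lemma yseq_sum t : \sum_i yseq R E t i 0 = n%:R.
Proof.
elim: t => [|t IH] /=.
  by rewrite (eq_bigr (fun _ => 1)) ?sumr_const ?card_ord // => i _; rewrite mxE.
under eq_bigr do rewrite mxE.
rewrite exchange_big /= -IH; apply: eq_bigr => j _.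
by rewrite -mulr_suml Wmx_colsum mul1r.
Qed.

Lemma yseq_ge_pi t i : pi i 0 <= yseq R E t i 0.
Proof.
elim: t i => [|t IH] i /=.
  by rewrite mxE -pi_sum1 (bigD1 i) //= lerDl sumr_ge0 // => k _; rewrite ltW.
rewrite -{1}W_pi !mxE; apply: ler_sum => j _.
by apply: ler_wpM2l; [exact: Wmx_ge0 | exact: IH].
Qed.

Lemma yseq_gt0 t i : 0 < yseq R E t i 0.
Proof. exact: lt_le_trans (pi_gt0 i) (yseq_ge_pi t i). Qed.

(* [W] is column stochastic, so [1^T y(t) = n = 1^T (n pi)] and [W^oo] kills the deviation. *)
Lemma yseq_devS t :
  yseq R E t.+1 - n%:R *: pi = (Wmx R E - Winf pi) *m (yseq R E t - n%:R *: pi).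
Proof.
rewrite /= mulmxBl /Winf -mulmxA mulmxBr -scalemxAr W_pi.
have -> : const_mx 1 *m (yseq R E t - n%:R *: pi) = 0 :> 'M[R]_1.
  apply/matrixP => a b; rewrite !ord1 !mxE.
  under eq_bigr do rewrite !mxE mul1r.
  by rewrite sumrB yseq_sum -mulr_sumr pi_sum1 mulr1 subrr.
by rewrite mulmx0 subr0.
Qed.

Lemma yseq_dev_le t :
  pinorm pi (yseq R E t - n%:R *: pi) <=
    sigmaW E pi ^+ t * pinorm pi (const_mx 1 - n%:R *: pi).
Proof.
elim: t => [|t IH]; first by rewrite expr0 mul1r.
rewrite yseq_devS exprS -mulrA.
apply: le_trans (pinorm_mulmx_le pi_gt0 pi_sum1 _ _) _.
by apply: ler_wpM2l; [exact: opnorm_pi_ge0 | exact: IH].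
Qed.

Lemma inv_yseq_le_deltaY t i : (yseq R E t i 0)^-1 <= deltaY R E.
Proof.
apply: ub_le_sup; last by exists t, i.
exists (\sum_k (pi k 0)^-1) => _ [s [j ->]].
apply: le_trans (_ : (pi j 0)^-1 <= _).
  by rewrite lef_pV2 ?posrE ?yseq_gt0 ?yseq_ge_pi.
by rewrite (bigD1 j) //= lerDl sumr_ge0 // => k _; rewrite invr_ge0 ltW.
Qed.

Lemma deltaY_ge0 : 0 <= deltaY R E.
Proof.
have [n0|n_gt0] := posnP n.
  rewrite /deltaY (_ : [set _ | _]%classic = set0) ?sup0 //.
  by apply/seteqP; split=> // r [t [[i]]]; move=> + _; rewrite n0.
apply: le_trans (inv_yseq_le_deltaY 0 (Ordinal n_gt0)).
by rewrite invr_ge0 ltW ?yseq_gt0.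
Qed.

Lemma sum_consensus_le d t (w : 'I_n -> 'rV[R]_d) x :
  \sum_j enorm (x - (yseq R E t j 0)^-1 *: w j) <=
    deltaY R E * (blocknorm pi (fun i => (n%:R * pi i 0) *: x - w i) +
                  sigmaW E pi ^+ t * pinorm pi (const_mx 1 - n%:R *: pi) * enorm x).
Proof.
set y := yseq R E t.
have dev_le : \sum_j `|y j 0 - n%:R * pi j 0| <=
    sigmaW E pi ^+ t * pinorm pi (const_mx 1 - n%:R *: pi).
  apply: le_trans (yseq_dev_le t).
  apply: le_trans (sum_norm_le_pinorm pi_gt0 pi_sum1 _).
  by under [X in _ <= X]eq_bigr do rewrite !mxE.
apply: le_trans (ler_sum _ (fun j _ => enorm_sub_scale_le (n%:R * pi j 0) x (w j)
  (yseq_gt0 t j) (inv_yseq_le_deltaY t j))) _.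
rewrite -mulr_sumr big_split /= -mulr_suml.
apply: ler_wpM2l; first exact: deltaY_ge0.
apply: lerD; first by apply: le_trans (sum_enorm_le_blocknorm pi_gt0 pi_sum1 _).
by apply: ler_wpM2r; [exact: enorm_ge0 | exact: dev_le].
Qed.

End PushSum.

Lemma wbar_wseqS (R : realType) n d (E : rel 'I_n) (fi : 'I_n -> 'rV[R]_d -> R)
    (alpha : R) w0 t :
  (forall i, E i i) ->
  let w := wseq E fi alpha w0 in
  wbar (w t.+1) = wbar (w t) -
    alpha *: (n%:R^-1 *: \sum_j grad (fi j) ((yseq R E t j 0)^-1 *: w t j)).
Proof.
move=> E_refl w; rewrite /wbar /w /= exchange_big /=.
under eq_bigr do rewrite -scaler_suml Wmx_colsum // scale1r.
by rewrite sumrB -scaler_sumr scalerBr !scalerA mulrC.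
Qed.

Unset Implicit Arguments.

Theorem proposition6p2 (R : realType) (n d : nat) (E : rel 'I_n)
  (pi : 'cV[R]_n) (fi : 'I_n -> 'rV[R]_d -> R) (Li : 'I_n -> R)
  (beta alpha : R) (wstar : 'rV[R]_d) (w0 : 'I_n -> 'rV[R]_d) :
  (* graph: self-loops and strong connectivity *)
  (forall i, E i i) ->
  (forall i j, connect E i j) ->
  (* pi: W pi = pi, pi_i > 0, sum pi_i = 1 *)
  Wmx R E *m pi = pi ->
  (forall i, 0 < pi i 0) ->
  \sum_i pi i 0 = 1 ->
  (* (F1) *)
  (forall i x, differentiable (fi i) x) ->
  (forall i x y, enorm (grad (fi i) x - grad (fi i) y) <= Li i * enorm (x - y)) ->
  (* (F2) *)
  0 < beta ->
  strongly_convex beta (avgf fi) ->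
  (forall w, avgf fi wstar <= avgf fi w) ->
  let L := \big[Num.max/0]_i Li i in
  let gamma := beta * L / (L + beta) in
  0 < alpha -> alpha <= 2 / (L + beta) ->
  let w := wseq E fi alpha w0 in
  let delta := deltaY R E in
  let sW := sigmaW E pi in
  let c := alpha * L * delta / n%:R in
  let p1 := pinorm pi (const_mx 1 - n%:R *: pi) in
  forall t : nat,
    enorm (wbar (w t.+1) - wstar) <=
      (1 - gamma * alpha + c * p1 * sW ^+ t) * enorm (wbar (w t) - wstar)
      + c * blocknorm pi (fun i => (n%:R * pi i 0) *: wbar (w t) - w t i)
      + c * p1 * sW ^+ t * enorm wstar.
Proof.
(* Strong connectivity only matters for [sW < 1], which the bound does not use. *)
move=> E_refl _ W_pi pi_gt0 pi_sum1 fi_diff fi_lip beta_gt0 F_sc wstar_min L gamma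
  alpha_gt0 alpha_le w delta sW c p1 t.
pose G x := n%:R^-1 *: \sum_i grad (fi i) x.
have L_ge0 : 0 <= L by exact: bigmax_ge_id.
have G_grad : is_gradient (avgf fi) G := is_gradient_avgf fi_diff.
have G_lip : enorm_lipschitz L G := enorm_lipschitz_avgf fi_lip.
have G_wstar : G wstar = 0 := grad_eq0_at_min G_grad wstar_min.
rewrite wbar_wseqS //; set x := wbar (w t).
apply: le_trans
  (inexact_gd_step G_grad G_lip L_ge0 beta_gt0 F_sc alpha_gt0 alpha_le _ _ G_wstar) _.
have grad_dev := enorm_lipschitz_avg fi_lip x (fun j => (yseq R E t j 0)^-1 *: w t j).
have consensus : \sum_j enorm (x - (yseq R E t j 0)^-1 *: w t j) <=
    delta * (blocknorm pi (fun i => (n%:R * pi i 0) *: x - w t i) +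
             sW ^+ t * p1 * (enorm (x - wstar) + enorm wstar)).
  apply: le_trans (sum_consensus_le E_refl W_pi pi_gt0 pi_sum1 t (w t) x) _.
  apply: ler_wpM2l; first exact: deltaY_ge0 W_pi pi_gt0 pi_sum1.
  rewrite lerD2l; apply: ler_wpM2l; last by rewrite -{1}(subrK wstar x) enormD.
  by apply: mulr_ge0; [apply: exprn_ge0; exact: opnorm_pi_ge0 | exact: pinorm_ge0].
have K_ge0 : 0 <= alpha * n%:R^-1 * L.
  by apply: mulr_ge0 => //; apply: mulr_ge0; [exact: ltW | rewrite invr_ge0].
have := ler_wpM2l (ltW alpha_gt0) grad_dev; have := ler_wpM2l K_ge0 consensus.
rewrite /c /delta /sW /p1 /gamma /G /w /L; lra.
Qed.
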